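(* The Laurent polynomial $f_\lambda$ is nondegenerate relative to $\Delta(A)$: for every face $\sigma$ of $\Delta(A)$ not containing the origin, the Laurent polynomials $x_i\partial f^\sigma_\lambda/\partial x_i$, $i=1,\dots,n$, have no common zero in $\big(\overline{\mathbb C(\lambda)}^\times\big)^n$.
   Context: Let $A=\{\mathbf a_1,\dots,\mathbf a_m\}\subseteq\mathbb Z^n$ be linearly independent over $\mathbb R$, $\mathbf a_0\in\mathbb Z^n$, and $\ell_0,\dots,\ell_m$ positive integers with gcd $1$ such that $\ell_0\mathbf a_0=\sum_{j=1}^m\ell_j\mathbf a_j$ and $\ell_0=\sum_{j=1}^m\ell_j$. Let $f_\lambda=\sum_{j=1}^m\ell_jx^{\mathbf a_j}-\ell_0\lambda x^{\mathbf a_0}$, $\lambda$ an indeterminate, and $\overline{\mathbb C(\lambda)}$ an algebraic closure of $\mathbb C(\lambda)$. Let $\Delta(A)$ be the convex hull of $A\cup\{\mathbf 0\}$. For a face $\sigma$ of $\Delta(A)$ not containing $\mathbf a_0$ set $f^\sigma_\lambda=\sum_{\mathbf a_j\in\sigma}\ell_jx^{\mathbf a_j}$; for a face containing $\mathbf a_0$ set $f^\sigma_\lambda=f_\lambda$. *)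

From HB Require Import structures.
From mathcomp Require Import all_boot all_order all_algebra.
From mathcomp Require Import boolp reals.
From mathcomp Require Import complex.
Set Implicit Arguments. Unset Strict Implicit. Unset Printing Implicit Defensive.
Import Order.TTheory GRing.Theory Num.Theory.
Local Open Scope ring_scope.

Definition dotv {R : realType} {n : nat} (w p : 'rV[R]_n) : R :=
  \sum_(i < n) w 0 i * p 0 i.

Definition rV_of_int {R : realType} {n : nat} (a : 'rV[int]_n) : 'rV[R]_n :=
  map_mx (fun z : int => z%:~R) a.

Definition conv_hull {R : realType} {n k : nat} (P : 'I_k -> 'rV[R]_n)
  (p : 'rV[R]_n) : Prop :=
  exists t : 'I_k -> R, (forall i, 0 <= t i) /\ \sum_(i < k) t i = 1 /\
                        p = \sum_(i < k) t i *: P i.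

Definition Delta_pts {R : realType} {n m : nat} (a : 'I_m -> 'rV[int]_n)
  (i : 'I_m.+1) : 'rV[R]_n :=
  match unlift ord0 i with Some j => rV_of_int (a j) | None => 0 end.

Definition Delta {R : realType} {n m : nat} (a : 'I_m -> 'rV[int]_n) :
  'rV[R]_n -> Prop := conv_hull (Delta_pts (R := R) a).

(* A (nonempty) face of a convex set P, cut out by a supporting hyperplane
   w . p = c with w . p <= c on P (w = 0, c = 0 gives P itself). *)
Definition is_face_data {R : realType} {n : nat} (P : 'rV[R]_n -> Prop)
  (w : 'rV[R]_n) (c : R) : Prop :=
  (forall p, P p -> dotv w p <= c) /\ (exists p, P p /\ dotv w p = c).

Definition face_pts {R : realType} {n : nat} (P : 'rV[R]_n -> Prop)
  (w : 'rV[R]_n) (c : R) (p : 'rV[R]_n) : Prop := P p /\ dotv w p = c.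

(* A Laurent polynomial in x_1..x_n is represented as a finite list of terms
   (coefficient, exponent vector), meaning  sum c * x^e. *)
Definition laurent (K : fieldType) (n : nat) := seq (K * 'rV[int]_n).

Definition monom {K : fieldType} {n : nat} (x : 'rV[K]_n) (e : 'rV[int]_n) : K :=
  \prod_(i < n) (x 0 i) ^ (e 0 i).

Definition leval {K : fieldType} {n : nat} (f : laurent K n) (x : 'rV[K]_n) : K :=
  \sum_(t <- f) t.1 * monom x t.2.

(* the operator x_i d/dx_i : c x^e |-> c e_i x^e *)
Definition xdx {K : fieldType} {n : nat} (i : 'I_n) (f : laurent K n) : laurent K n :=
  [seq (t.1 * ((t.2 : 'rV[int]_n) 0 i)%:~R, t.2) | t <- f].

Definition f_lam {K : fieldType} {n m : nat} (a : 'I_m -> 'rV[int]_n)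
  (a0 : 'rV[int]_n) (l : 'I_m -> nat) (l0 : nat) (lam : K) : laurent K n :=
  rcons [seq ((l j)%:R, a j) | j <- enum 'I_m] (- (l0%:R * lam), a0).

Definition f_sigma {K : fieldType} {R : realType} {n m : nat}
  (a : 'I_m -> 'rV[int]_n) (a0 : 'rV[int]_n) (l : 'I_m -> nat) (l0 : nat)
  (lam : K) (inS : 'rV[R]_n -> Prop) : laurent K n :=
  if `[< inS (rV_of_int a0) >] then f_lam a a0 l l0 lam
  else [seq ((l j)%:R, a j) | j <- enum 'I_m & `[< inS (rV_of_int (a j)) >]].

Definition Clam (R : realType) := {fraction {poly R[i]}}.

Definition lamC (R : realType) : Clam R := @FracField.tofrac _ ('X : {poly R[i]}).

(* K together with iota : C(lambda) -> K is an algebraic closure of C(lambda):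
   K is algebraically closed and algebraic over the image of iota. *)
Definition is_alg_closure (R : realType) (K : closedFieldType)
  (iota : {rmorphism Clam R -> K}) : Prop :=
  forall y : K, exists p : {poly Clam R}, p != 0 /\ root (map_poly iota p) y.

From HB Require Import structures.
From mathcomp Require Import all_boot all_order all_algebra.
From mathcomp Require Import boolp reals complex.
From mathcomp Require Import ring.
Set Implicit Arguments. Unset Strict Implicit. Unset Printing Implicit Defensive.
Import Order.TTheory GRing.Theory Num.Theory.
Local Open Scope ring_scope.

(* Let x be a common zero of the x_i d/dx_i f^sigma. Each of these
   equations is the i-th coordinate of a vector identity sum_j d_j a_j = 0,
   so linear independence of the a_j (which passes from R to K, as the a_j
   are integer vectors) forces every d_j to vanish.  If a_0 is not in sigma,
   d_j = l_j x^{a_j} for the vertices a_j of sigma, and sigma has a vertex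
   other than 0: contradiction.  If a_0 is in sigma, rewriting l_0 a_0 as
   sum_j l_j a_j gives d_j = l_j (x^{a_j} - lambda x^{a_0}), so
   x^{a_j} = lambda x^{a_0} for all j; raising to the powers l_j and using
   both relations between the l_j yields lambda^{l_0} = 1, which fails
   since lambda is transcendental over C.  Neither gcd(l_0, ..., l_m) = 1
   nor the algebraicity of K over C(lambda) is needed. *)

Section FacesOfConvexHulls.
Variables (R : realType) (n : nat).

Lemma dotv_sum k (w : 'rV[R]_n) (t : 'I_k -> R) (P : 'I_k -> 'rV[R]_n) :
  dotv w (\sum_(i < k) t i *: P i) = \sum_(i < k) t i * dotv w (P i).
Proof.
rewrite /dotv; under eq_bigr do rewrite summxE mulr_sumr.
rewrite exchange_big /=; apply: eq_bigr => i _; rewrite mulr_sumr.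
by apply: eq_bigr => j _; rewrite mxE mulrCA.
Qed.

Lemma conv_hull_pt k (P : 'I_k -> 'rV[R]_n) i0 : conv_hull P (P i0).
Proof.
exists (fun i => (i == i0)%:R); split; first by move=> i; rewrite ler0n.
split; rewrite (bigD1 i0) //= big1 ?addr0 ?eqxx ?scale1r // => i /negbTE ->//.
by rewrite scale0r.
Qed.

Lemma face_conv_hull_pt k (P : 'I_k -> 'rV[R]_n) w c :
  is_face_data (conv_hull P) w c -> exists i, face_pts (conv_hull P) w c (P i).
Proof.
case=> hle [_ [[t [t_ge0 [t_sum1 ->]]] hc]].
have gap_ge0 i : 0 <= c - dotv w (P i) by rewrite subr_ge0; apply/hle/conv_hull_pt.
have gap_avg0 : \sum_(i < k) t i * (c - dotv w (P i)) = 0.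
  under eq_bigr do rewrite mulrBr.
  by rewrite sumrB -mulr_suml t_sum1 mul1r -dotv_sum hc subrr.
have [i t_neq0] : exists i, t i != 0.
  apply/not_existsP => t0; move: t_sum1.
  by rewrite big1 => [/eqP|i _]; [rewrite eq_sym oner_eq0 | apply/eqP/negPn/negP/t0].
exists i; split; first exact: conv_hull_pt.
have /(_ i isT)/eqP := psumr_eq0P (fun i _ => mulr_ge0 (t_ge0 i) (gap_ge0 i)) gap_avg0.
by rewrite mulf_eq0 (negbTE t_neq0) subr_eq0 => /eqP.
Qed.

End FacesOfConvexHulls.

Lemma Delta_face_vertex (R : realType) n m (a : 'I_m -> 'rV[int]_n) w c :
  is_face_data (Delta (R := R) a) w c -> ~ face_pts (Delta (R := R) a) w c 0 ->
  exists j, face_pts (Delta (R := R) a) w c (rV_of_int (a j)).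
Proof.
move=> hface h0; case: (face_conv_hull_pt hface) => i; rewrite /Delta_pts.
by case: unliftP => [j _|_] hi; [exists j | case: h0].
Qed.

Section IntegerRows.
Variables (n m : nat) (a : 'I_m -> 'rV[int]_n).

Definition int_rows : 'M[int]_(m, n) := \matrix_(j, k) a j 0 k.

Lemma row_free_int_rows_real (R : realType) :
  (forall c : 'I_m -> R, \sum_(j < m) c j *: rV_of_int (a j) = 0 -> forall j, c j = 0) ->
  row_free (map_mx intr int_rows : 'M[R]_(m, n)).
Proof.
move=> hA; apply: inj_row_free => v hv; apply/rowP => j; rewrite mxE.
apply: (hA (fun j => v 0 j)); rewrite -[RHS]hv mulmx_sum_row.
by apply: eq_bigr => i _; congr (_ *: _); apply/rowP => k; rewrite !mxE.
Qed.

Lemma row_free_int_rows_map (F K : fieldType) (f : {rmorphism F -> K}) :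
  row_free (map_mx intr int_rows : 'M[F]_(m, n)) ->
  row_free (map_mx intr int_rows : 'M[K]_(m, n)).
Proof.
have -> : map_mx intr int_rows = map_mx f (map_mx intr int_rows : 'M[F]_(m, n)).
  by apply/matrixP => p q; rewrite !mxE rmorph_int.
by rewrite row_free_map.
Qed.

Lemma int_rows_comb_eq0 (K : fieldType) (d : 'I_m -> K) :
  row_free (map_mx intr int_rows : 'M[K]_(m, n)) ->
  (forall i, \sum_(j < m) d j * (a j 0 i)%:~R = 0) -> forall j, d j = 0.
Proof.
move=> free hd j.
have comb0 : (\row_j d j) *m map_mx intr int_rows = 0 *m map_mx intr int_rows.
  rewrite mul0mx; apply/rowP => i; rewrite !mxE -[RHS](hd i).
  by apply: eq_bigr => k _; rewrite !mxE.
by have /rowP/(_ j) := row_free_inj free comb0; rewrite !mxE.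
Qed.

End IntegerRows.

Section Monomials.
Variables (K : fieldType) (n : nat) (x : 'rV[K]_n).
Hypothesis x_neq0 : forall i, x 0 i != 0.

Lemma monom_neq0 e : monom x e != 0.
Proof. by rewrite /monom prodf_seq_neq0; apply/allP => i _; rewrite expfz_neq0. Qed.

Lemma monom0 : monom x 0 = 1.
Proof. by rewrite /monom big1 // => i _; rewrite mxE expr0z. Qed.

Lemma monomD e1 e2 : monom x (e1 + e2) = monom x e1 * monom x e2.
Proof. by rewrite /monom -big_split; apply: eq_bigr => i _; rewrite mxE expfzDr. Qed.

Lemma monom_sum k (F : 'I_k -> 'rV[int]_n) :
  monom x (\sum_(j < k) F j) = \prod_(j < k) monom x (F j).
Proof. exact: (big_morph (monom x) monomD monom0). Qed.

Lemma monomZ_nat e k : monom x (k%:Z *: e) = monom x e ^+ k.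
Proof.
rewrite -natz scaler_nat; elim: k => [|k IH]; first by rewrite mulr0n monom0.
by rewrite mulrS monomD IH exprS.
Qed.

End Monomials.

Lemma leval_xdx (K : fieldType) n (x : 'rV[K]_n) i (f : laurent K n) :
  leval (xdx i f) x = \sum_(t <- f) t.1 * (t.2 0 i)%:~R * monom x t.2.
Proof. by rewrite /leval /xdx big_map. Qed.

Section CriticalPoints.
Variables (K : fieldType) (n m : nat) (a : 'I_m -> 'rV[int]_n) (l : 'I_m -> nat).
Variable x : 'rV[K]_n.
Hypothesis x_neq0 : forall i, x 0 i != 0.
Hypothesis l_neq0 : forall j, (l j)%:R != 0 :> K.
Hypothesis a_free : row_free (map_mx intr (int_rows a) : 'M[K]_(m, n)).

Lemma sub_sum_no_critical (P : pred 'I_m) :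
  (forall i, leval (xdx i [seq ((l j)%:R, a j) | j <- enum 'I_m & P j]) x = 0) ->
  forall j, ~~ P j.
Proof.
move=> crit j; apply/negP => Pj.
pose d k := if P k then (l k)%:R * monom x (a k) else 0.
suff d_eq0 : forall i, \sum_k d k * (a k 0 i)%:~R = 0.
  have /eqP := int_rows_comb_eq0 a_free d_eq0 j.
  by rewrite /d Pj mulf_eq0 (negbTE (l_neq0 j)) (negbTE (monom_neq0 x_neq0 _)).
move=> i; rewrite -[RHS](crit i) leval_xdx big_map big_filter big_enum_cond /=.
rewrite [RHS]big_mkcond.
by apply: eq_bigr => k _; rewrite /d; case: (P k); rewrite ?mul0r // mulrAC.
Qed.

Variables (a0 : 'rV[int]_n) (l0 : nat) (lam : K).
Hypothesis l_rel : l0%:Z *: a0 = \sum_(j < m) (l j)%:Z *: a j.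
Hypothesis crit : forall i, leval (xdx i (f_lam a a0 l l0 lam)) x = 0.

Lemma f_lam_critical_monom j : monom x (a j) = lam * monom x a0.
Proof.
have l_rel_i i : (l0%:R : K) * (a0 0 i)%:~R = \sum_j (l j)%:R * (a j 0 i)%:~R.
  have := congr1 (fun v : 'rV[int]_n => (v 0 i)%:~R : K) l_rel.
  rewrite /= !mxE summxE rmorph_sum intrM /= => ->.
  by apply: eq_bigr => k _; rewrite mxE intrM.
pose d k := (l k)%:R * (monom x (a k) - lam * monom x a0).
suff d_eq0 : forall i, \sum_k d k * (a k 0 i)%:~R = 0.
  have /eqP := int_rows_comb_eq0 a_free d_eq0 j.
  by rewrite mulf_eq0 (negbTE (l_neq0 j)) subr_eq0 => /eqP.
move=> i; rewrite -[RHS](crit i) leval_xdx /f_lam -cats1 big_cat big_seq1.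
rewrite big_map big_enum /=.
rewrite (_ : - (l0%:R * lam) * (a0 0 i)%:~R = - lam * (l0%:R * (a0 0 i)%:~R)); last by ring.
rewrite l_rel_i mulr_sumr mulr_suml -big_split /=.
by apply: eq_bigr => k _; rewrite /d; ring.
Qed.

Hypothesis l_sum : l0 = (\sum_(j < m) l j)%N.

Lemma f_lam_critical_root_of_unity : lam ^+ l0 = 1.
Proof.
have x_a0_pow : monom x a0 ^+ l0 = lam ^+ l0 * monom x a0 ^+ l0.
  rewrite -[LHS]monomZ_nat // l_rel monom_sum //.
  under eq_bigr do rewrite monomZ_nat // f_lam_critical_monom.
  by rewrite prodrXr -l_sum exprMn.
apply: (mulIf (expf_neq0 l0 (monom_neq0 x_neq0 a0))).
by rewrite mul1r -x_a0_pow.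
Qed.

End CriticalPoints.

Lemma lamC_not_root_of_unity (R : realType) (K : fieldType)
  (iota : {rmorphism Clam R -> K}) k :
  (0 < k)%N -> iota (lamC R) ^+ k != 1.
Proof.
move=> k_gt0; rewrite -rmorphXn -(rmorph1 iota) (inj_eq (fmorph_inj iota)).
rewrite /lamC -rmorphXn -(rmorph1 (@FracField.tofrac _)) tofrac_eq.
apply/negP => /eqP /(congr1 (fun p : {poly R[i]} => size p)).
by rewrite /= size_polyXn size_poly1 => -[k0]; rewrite k0 in k_gt0.
Qed.

Theorem proposition5p1
  (R : realType) (n m : nat)
  (a : 'I_m -> 'rV[int]_n) (a0 : 'rV[int]_n)
  (l : 'I_m -> nat) (l0 : nat)
  (* A = {a_1, ..., a_m} is linearly independent over the reals *)
  (hA : forall c : 'I_m -> R,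
      \sum_(j < m) c j *: rV_of_int (a j) = 0 -> forall j, c j = 0)
  (* l_0, ..., l_m positive integers with gcd 1 *)
  (hl : forall j, (0 < l j)%N) (hl0 : (0 < l0)%N)
  (hgcd : gcdn l0 (\big[gcdn/0%N]_(j < m) l j) = 1%N)
  (* l_0 a_0 = sum_j l_j a_j  and  l_0 = sum_j l_j *)
  (hrel : (l0%:Z) *: a0 = \sum_(j < m) (l j)%:Z *: a j)
  (hsum : l0 = (\sum_(j < m) l j)%N)
  (* K is an algebraic closure of C(lambda) via iota *)
  (K : closedFieldType) (iota : {rmorphism Clam R -> K})
  (hK : is_alg_closure iota)
  (* sigma = {p in Delta(A) | w.p = c} is a (nonempty) face of Delta(A) *)
  (w : 'rV[R]_n) (c : R)
  (hface : is_face_data (Delta (R := R) a) w c)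
  (* sigma does not contain the origin *)
  (h0 : ~ face_pts (Delta (R := R) a) w c 0) :
  ~ (exists x : 'rV[K]_n, (forall i, x 0 i != 0) /\
       forall i : 'I_n,
         leval (xdx i (f_sigma a a0 l l0 (iota (lamC R))
                                (face_pts (Delta (R := R) a) w c))) x = 0).
Proof.
case=> x [x_neq0 crit].
pose toK : {rmorphism R -> K} :=
  iota \o @FracField.tofrac _ \o polyC \o real_complex R.
have l_neq0 j : (l j)%:R != 0 :> K.
  by rewrite -(rmorph_nat toK) fmorph_eq0 pnatr_eq0 -lt0n.
have a_free := row_free_int_rows_map toK (row_free_int_rows_real hA).
move: crit; rewrite /f_sigma; case: ifP => _ crit.
  have := f_lam_critical_root_of_unity x_neq0 l_neq0 a_free hrel crit hsum.
  by apply/eqP; apply: lamC_not_root_of_unity.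
have [j face_j] := Delta_face_vertex hface h0.
by have /negP := sub_sum_no_critical x_neq0 l_neq0 a_free crit j; rewrite asboolT.
Qed.
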